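(* Let $I$ be a stable matching instance with $k$-range preferences and $n$ men and $n$ women. Then each agent in $I$ has at most $5k - 4$ stable partners. In particular, each agent can appear in at most $5k - 5$ rotations.
   Context: An SM instance $I$ has men and women with complete strict preference lists; $P_a(b)$ is the rank $a$ assigns $b$. For an agent $a$, $\min\mathrm{rank}(a)$ and $\max\mathrm{rank}(a)$ are the minimum and maximum of $P_b(a)$ over agents $b$ of the opposite sex; $I$ has $k$-range preferences if $\max\mathrm{rank}(a) - \min\mathrm{rank}(a) \leq k-1$ for all $a$. A stable partner of $a$ is an agent matched to $a$ in some stable matching. A rotation of $I$ is a circular list $(m_1,w_1),\ldots,(m_\ell,w_\ell)$ of pairs of some stable matching $\mu$ such that $w_{i+1}$ is the first woman after $w_i$ on $m_i$'s list who prefers $m_i$ to her partner $m_{i+1}$ in $\mu$. *)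

From mathcomp Require Import all_boot all_fingroup.
Set Implicit Arguments. Unset Strict Implicit. Unset Printing Implicit Defensive.

(* An SM instance with n men and n women, both indexed by 'I_n.
   [prefM I m] is man m's complete strict preference list, given as the
   rank function w |-> P_m(w) (0 = most preferred); likewise [prefW I w]
   gives P_w(m).  Being a permutation = complete and strict. *)
Record SMI (n : nat) := MkSMI {
  prefM : 'I_n -> {perm 'I_n};
  prefW : 'I_n -> {perm 'I_n} }.

Section SM.
Variables (n : nat) (I : SMI n).

Definition PM (m w : 'I_n) : nat := prefM I m w.
Definition PW (w m : 'I_n) : nat := prefW I w m.

Definition minrankM (m : 'I_n) : nat := \big[minn/n]_(w : 'I_n) PW w m.
Definition maxrankM (m : 'I_n) : nat := \max_(w : 'I_n) PW w m.
Definition minrankW (w : 'I_n) : nat := \big[minn/n]_(m : 'I_n) PM m w.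
Definition maxrankW (w : 'I_n) : nat := \max_(m : 'I_n) PM m w.

Definition k_range (k : nat) : Prop :=
  (forall m : 'I_n, maxrankM m - minrankM m <= k - 1) /\
  (forall w : 'I_n, maxrankW w - minrankW w <= k - 1).

(* A (perfect) matching: man m is matched to woman mu m, and woman w to
   man mu^-1 w. *)
Definition blocking (mu : {perm 'I_n}) (m w : 'I_n) : bool :=
  (PM m w < PM m (mu m)) && (PW w m < PW w ((mu^-1)%g w)).

Definition stable (mu : {perm 'I_n}) : bool :=
  [forall m : 'I_n, forall w : 'I_n, ~~ blocking mu m w].

Definition stable_partners_of_man (m : 'I_n) : {set 'I_n} :=
  [set w : 'I_n | [exists mu : {perm 'I_n}, stable mu && (mu m == w)]].
Definition stable_partners_of_woman (w : 'I_n) : {set 'I_n} :=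
  [set m : 'I_n | [exists mu : {perm 'I_n}, stable mu && (mu m == w)]].

Definition w_prefers_to_partner (mu : {perm 'I_n}) (w m : 'I_n) : bool :=
  PW w m < PW w ((mu^-1)%g w).

Definition rot_step (mu : {perm 'I_n}) (p q : 'I_n * 'I_n) : bool :=
  let: (mi, wi) := p in let: (_, wj) := q in
  [&& PM mi wi < PM mi wj, w_prefers_to_partner mu wj mi &
      [forall w : 'I_n, (PM mi wi < PM mi w < PM mi wj) ==>
                          ~~ w_prefers_to_partner mu w mi]].

(* A rotation, represented by a circular list s = [(m_1,w_1);...;(m_l,w_l)]
   of distinct pairs (the successor of the last pair is the first one). *)
Definition is_rotation (s : seq ('I_n * 'I_n)) : Prop :=
  exists mu : {perm 'I_n},
    [/\ stable mu, 0 < size s, uniq s,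
        all (fun p => mu p.1 == p.2) s &
        all (fun pq => rot_step mu pq.1 pq.2) (zip s (rot 1 s))].

Definition same_rotation (s1 s2 : seq ('I_n * 'I_n)) : bool :=
  [exists i : 'I_(size s1).+1, rot i s1 == s2].

End SM.

From mathcomp Require Import all_boot all_fingroup zify.
Set Implicit Arguments. Unset Strict Implicit. Unset Printing Implicit Defensive.

(* Under k-range preferences all agents rank a given agent within k - 1 of one
   another, so ranks on different lists can be compared.  If m is matched to w
   in a stable matching, the men that w ranks above m all hold partners they
   prefer to w, and the women that m ranks above w all hold partners they
   prefer to m; counting either set with the k-range bound shows that P_m(w)
   lies within 2(k - 1) of minrank(m).  Hence m has at most 4(k - 1) + 1 stable
   partners, and women are handled by exchanging the sexes.
   A pair (m, w) lies in at most one rotation: eliminating a rotation yields a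
   stable matching, and no stable matching gives m a partner strictly between w
   and his next woman in the rotation (nor, dually, gives that woman a partner
   strictly between her two men), so the successor of (m, w) is the same in
   every rotation containing it.  The woman of m in a rotation is a stable
   partner of m followed by a worse one, which leaves at most 4(k - 1)
   rotations through m. *)

Lemma size_le_range_inj (T : eqType) (R : rel T) (f : T -> nat) (lo hi : nat)
    (s : seq T) :
  pairwise (fun x y => ~~ R x y) s -> {in s &, forall x y, f x = f y -> R x y} ->
  {in s, forall x, lo <= f x < hi} -> size s <= hi - lo.
Proof.
move=> s_distinct f_sep f_range.
rewrite -(size_map f) -(size_iota lo (hi - lo)); apply: uniq_leq_size.
  rewrite uniq_pairwise pairwise_map.
  apply: (sub_in_pairwise (P := mem s)) s_distinct; last exact/allP.
  by move=> x y xs ys /= /negP Rxy; apply/eqP => /(f_sep _ _ xs ys).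
by move=> _ /mapP [x /f_range x_range ->]; rewrite mem_iota; lia.
Qed.

Lemma card_le_range_inj (T : finType) (A : {pred T}) (f : T -> nat) (lo hi : nat) :
  {in A &, injective f} -> {in A, forall x, lo <= f x < hi} -> #|A| <= hi - lo.
Proof.
move=> f_inj f_range; rewrite cardE.
apply: (@size_le_range_inj T eq_op); first by rewrite -uniq_pairwise enum_uniq.
  by move=> x y; rewrite !mem_enum => xA yA fxy; rewrite (f_inj x y xA yA fxy).
by move=> x; rewrite mem_enum; apply: f_range.
Qed.

Lemma perm_rank_le_card n (p : {perm 'I_n}) (y : 'I_n) :
  p y <= #|[set x | p x < p y]|.
Proof.
pose g (i : 'I_(p y)) : 'I_n := (p^-1)%g (widen_ord (ltnW (ltn_ord (p y))) i).
have g_inj : injective g by move=> i j /perm_inj /(congr1 val) /= /val_inj.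
rewrite -[X in X <= _]card_ord -cardsT -(card_imset _ g_inj).
by apply/subset_leq_card/subsetP => _ /imsetP [i _ ->]; rewrite inE permKV /=.
Qed.

Lemma bigmin_le (T : finType) (F : T -> nat) (x0 : nat) (i : T) :
  \big[minn/x0]_(j : T) F j <= F i.
Proof.
have : i \in index_enum T by rewrite mem_index_enum.
elim: (index_enum T) => [|j r IHr] //; rewrite big_cons in_cons.
by case/orP => [/eqP <-|/IHr]; [exact: geq_minl | apply/leq_trans/geq_minr].
Qed.

Lemma all_zip_rot1 (T : Type) (r : rel T) (s : seq T) :
  all (fun pq => r pq.1 pq.2) (zip s (rot 1 s)) = path.cycle r s.
Proof.
case: s => [|x s] //; rewrite rot1_cons /=.
by elim: s x {2 4}x => [|z s IHs] x y //=; rewrite IHs.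
Qed.

Lemma rot_of_common_next (T : finType) (s1 s2 : seq T) (x : T) :
  uniq s1 -> uniq s2 -> x \in s1 -> x \in s2 ->
  (forall y, y \in s1 -> y \in s2 -> next s1 y = next s2 y) ->
  exists2 i, i <= size s1 & rot i s1 = s2.
Proof.
move=> s1_uniq s2_uniq x_s1 x_s2 next_eq.
(* Both cycles are rotations of the orbit of x under this common successor. *)
pose f y := if y \in s1 then next s1 y else next s2 y.
have f_s1 : fcycle f s1.
  rewrite (@eq_in_cycle _ (mem s1) _ (frel (next s1))) ?cycle_next //.
  by move=> y z ys _ /=; rewrite /f ys.
have f_s2 : fcycle f s2.
  rewrite (@eq_in_cycle _ (mem s2) _ (frel (next s2))) ?cycle_next //.
  by move=> y z ys _ /=; rewrite /f; case: ifP => // /next_eq ->.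
have rot_eq : rot (index x s1) s1 = rot (index x s2) s2.
  by rewrite -(fingraph.orbitE f_s1) -?(fingraph.orbitE f_s2).
exists (rot_add s1 (index x s1) (size s1 - index x s2)); first exact: leq_rot_add.
have size_eq : size s1 = size s2.
  by rewrite -(size_rot (index x s1)) rot_eq size_rot.
rewrite -rot_rot_add rot_eq size_eq -(size_rot (index x s2)).
by rewrite -/(rotr (index x s2) (rot (index x s2) s2)) rotK.
Qed.

Section Matchings.
Variables (n : nat) (I : SMI n).
Implicit Types (mu nu : {perm 'I_n}) (m w x : 'I_n).

Lemma PM_inj m : injective (PM I m).
Proof. by move=> w1 w2 /val_inj /perm_inj. Qed.

Lemma PW_inj w : injective (PW I w).
Proof. by move=> m1 m2 /val_inj /perm_inj. Qed.

Lemma minrankM_le m w : minrankM I m <= PW I w m.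
Proof. exact: bigmin_le. Qed.

Lemma minrankW_le w m : minrankW I w <= PM I m w.
Proof. exact: bigmin_le. Qed.

Lemma stableP mu : reflect (forall m w, ~~ blocking I mu m w) (stable I mu).
Proof.
apply: (iffP forallP) => [mu_st m w | mu_st m]; last exact/forallP.
exact: (forallP (mu_st m)).
Qed.

Lemma stable_better_woman mu m w : stable I mu ->
  PM I m w < PM I m (mu m) -> PW I w ((mu^-1)%g w) < PW I w m.
Proof.
move=> /stableP mu_st m_w; have := mu_st m w.
rewrite /blocking m_w /= -leqNgt leq_eqVlt => /orP [/eqP /PW_inj m_eq | //].
by move: m_w; rewrite -m_eq permKV ltnn.
Qed.

Lemma stable_better_man mu m w : stable I mu ->
  PW I w m < PW I w ((mu^-1)%g w) -> PM I m (mu m) < PM I m w.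
Proof.
move=> /stableP mu_st w_m; have := mu_st m w.
rewrite /blocking w_m andbT -leqNgt leq_eqVlt => /orP [/eqP /PM_inj w_eq | //].
by move: w_m; rewrite -w_eq permK ltnn.
Qed.

Definition men_preferring mu nu : {set 'I_n} :=
  [set x | PM I x (mu x) < PM I x (nu x)].

Lemma imset_men_preferring mu nu : stable I mu -> stable I nu ->
  mu @: men_preferring mu nu = nu @: men_preferring mu nu.
Proof.
move=> mu_st nu_st; set P := men_preferring mu nu.
set Q := [set y | PW I y ((nu^-1)%g y) < PW I y ((mu^-1)%g y)].
have muP_Q : mu @: P \subset Q.
  apply/subsetP => _ /imsetP [x + ->]; rewrite !inE permK.
  exact: stable_better_woman nu_st.
have Q_nuP : Q \subset nu @: P.
  apply/subsetP => y; rewrite inE => y_pref; apply/imsetP.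
  exists ((nu^-1)%g y); last by rewrite permKV.
  by rewrite inE permKV; apply: stable_better_man mu_st _.
apply/eqP; rewrite eqEcard (subset_trans muP_Q Q_nuP).
by rewrite !card_imset ?andTb ?leqnn //; apply: perm_inj.
Qed.

Lemma no_stable_partner_between mu nu m w' : stable I mu -> stable I nu ->
  (forall w, PM I m (mu m) < PM I m w < PM I m w' ->
     PW I w ((mu^-1)%g w) <= PW I w m) ->
  ~~ (PM I m (mu m) < PM I m (nu m) < PM I m w').
Proof.
move=> mu_st nu_st no_better; apply/negP => /andP [mu_nu nu_w'].
have : nu m \in mu @: men_preferring mu nu.
  by rewrite imset_men_preferring // imset_f // inE.
case/imsetP => z; rewrite inE => z_pref nu_m.
have mu_inv : (mu^-1)%g (nu m) = z by rewrite nu_m permK.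
have z_ne_m : z != m by apply: contraTneq mu_nu => z_m; rewrite nu_m z_m ltnn.
have z_m : PW I (nu m) z < PW I (nu m) m.
  rewrite ltn_neqAle (inj_eq (@PW_inj _)) z_ne_m.
  by have := no_better (nu m); rewrite mu_nu nu_w' mu_inv => ->.
have := stable_better_man nu_st (m := z) (w := nu m); rewrite permK => /(_ z_m).
by rewrite nu_m ltnNge (ltnW z_pref).
Qed.

End Matchings.

Definition swapSMI n (I : SMI n) : SMI n := MkSMI (prefW I) (prefM I).

Section Duality.
Variables (n : nat) (I : SMI n).

Lemma stable_swap (mu : {perm 'I_n}) : stable (swapSMI I) (mu^-1)%g = stable I mu.
Proof.
by apply/stableP/stableP => mu_st a b; have := mu_st b a;
  rewrite /blocking invgK andbC.
Qed.

Lemma k_range_swap k : k_range I k -> k_range (swapSMI I) k.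
Proof. by case. Qed.

Lemma stable_partners_swap w :
  stable_partners_of_woman I w = stable_partners_of_man (swapSMI I) w.
Proof.
apply/setP => m; rewrite !inE; apply/existsP/existsP => [[mu]|[mu]].
  move=> /andP [mu_st /eqP <-]; exists (mu^-1)%g.
  by rewrite stable_swap mu_st permK eqxx.
move=> /andP [mu_st /eqP <-]; exists (mu^-1)%g.
by rewrite -stable_swap invgK mu_st permK eqxx.
Qed.

Lemma no_stable_partner_between_dual (mu nu : {perm 'I_n}) w m' :
  stable I mu -> stable I nu ->
  (forall x, PW I w ((mu^-1)%g w) < PW I w x < PW I w m' ->
     PM I x (mu x) <= PM I x w) ->
  ~~ (PW I w ((mu^-1)%g w) < PW I w ((nu^-1)%g w) < PW I w m').
Proof.
rewrite -stable_swap -(stable_swap nu) => mu_st nu_st no_better.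
apply: (no_stable_partner_between mu_st nu_st) => x; rewrite invgK.
exact: no_better.
Qed.

End Duality.

Section RankWindow.
Variables (n : nat) (I : SMI n) (k : nat).
Hypothesis I_k_range : k_range I k.

Lemma k_range_PW m w : PW I w m <= minrankM I m + (k - 1).
Proof.
have := I_k_range.1 m; have := @leq_bigmax _ (fun w => PW I w m) w.
rewrite /maxrankM /=; lia.
Qed.

Lemma k_range_PM w m : PM I m w <= minrankW I w + (k - 1).
Proof.
have := I_k_range.2 w; have := @leq_bigmax _ (fun m => PM I m w) m.
rewrite /maxrankW /=; lia.
Qed.

Variables (mu : {perm 'I_n}) (mu_stable : stable I mu).

Lemma minrankM_le_partner_rank m : minrankM I m <= PM I m (mu m) + 2 * (k - 1).
Proof.
have better_than_m x : PW I (mu m) x < PW I (mu m) m ->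
    PM I m (mu x) < PM I m (mu m) + 2 * (k - 1).
  move=> x_m; have x_pref : PM I x (mu x) < PM I x (mu m).
    by apply: (stable_better_man mu_stable); rewrite permK.
  have := k_range_PM (mu x) m; have := minrankW_le I (mu x) x.
  have := k_range_PM (mu m) x; have := minrankW_le I (mu m) m; lia.
have card_better : #|[set x | prefW I (mu m) x < prefW I (mu m) m]| <=
    PM I m (mu m) + 2 * (k - 1) - 0.
  apply: (card_le_range_inj (f := fun x => PM I m (mu x))).
    by move=> x1 x2 _ _ /PM_inj /perm_inj.
  by move=> x; rewrite inE => /better_than_m.
have := perm_rank_le_card (prefW I (mu m)) m; have := minrankM_le I m (mu m).
rewrite /PW; lia.
Qed.

Lemma partner_rank_le_minrankM m : PM I m (mu m) <= minrankM I m + 2 * (k - 1).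
Proof.
have better_than_mu_m x : PM I m x < PM I m (mu m) ->
    PW I (mu m) ((mu^-1)%g x) < minrankM I m + 2 * (k - 1).
  move=> /(stable_better_woman mu_stable) x_pref.
  have := k_range_PW ((mu^-1)%g x) (mu m); have := minrankM_le I ((mu^-1)%g x) x.
  have := k_range_PW m x; lia.
have card_better : #|[set x | prefM I m x < prefM I m (mu m)]| <=
    minrankM I m + 2 * (k - 1) - 0.
  apply: (card_le_range_inj (f := fun x => PW I (mu m) ((mu^-1)%g x))).
    by move=> x1 x2 _ _ /PW_inj /perm_inj.
  by move=> x; rewrite inE => /better_than_mu_m.
have := perm_rank_le_card (prefM I m) (mu m); rewrite /PM; lia.
Qed.

End RankWindow.

Section RankWindowDual.
Variables (n : nat) (I : SMI n) (k : nat).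
Hypothesis I_k_range : k_range I k.
Variables (mu : {perm 'I_n}) (mu_stable : stable I mu).

Lemma minrankW_le_partner_rank w :
  minrankW I w <= PW I w ((mu^-1)%g w) + 2 * (k - 1).
Proof.
by apply: (minrankM_le_partner_rank (k_range_swap I_k_range)); rewrite stable_swap.
Qed.

Lemma partner_rank_le_minrankW w :
  PW I w ((mu^-1)%g w) <= minrankW I w + 2 * (k - 1).
Proof.
by apply: (partner_rank_le_minrankM (k_range_swap I_k_range)); rewrite stable_swap.
Qed.

End RankWindowDual.

Lemma card_stable_partners_of_man n (I : SMI n) k m : k_range I k ->
  #|stable_partners_of_man I m| <= 4 * (k - 1) + 1.
Proof.
move=> I_k_range.
suff : #|stable_partners_of_man I m| <=
    (minrankM I m + 2 * (k - 1)).+1 - (minrankM I m - 2 * (k - 1)) by lia.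
apply: (card_le_range_inj (f := PM I m)) => [w1 w2 _ _ /PM_inj //|w].
rewrite inE => /existsP [nu /andP [nu_st /eqP <-]].
have := minrankM_le_partner_rank I_k_range nu_st m.
have := partner_rank_le_minrankM I_k_range nu_st m; lia.
Qed.

Lemma card_stable_partners_of_woman n (I : SMI n) k w : k_range I k ->
  #|stable_partners_of_woman I w| <= 4 * (k - 1) + 1.
Proof.
move=> I_k; rewrite stable_partners_swap.
exact: card_stable_partners_of_man (k_range_swap I_k).
Qed.

Record exposed n (I : SMI n) (mu : {perm 'I_n}) (s : seq ('I_n * 'I_n)) : Prop :=
  Exposed {
    exposed_stable : stable I mu;
    exposed_uniq : uniq s;
    exposed_partner : forall a b, (a, b) \in s -> mu a = b;
    exposed_step : {in s, forall p, rot_step I mu p (next s p)} }.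

Lemma is_rotation_exposed n (I : SMI n) s :
  is_rotation I s -> exists mu, exposed I mu s.
Proof.
case=> mu [mu_st _ s_uniq /allP s_mu s_step]; exists mu; split => //.
  by move=> a b /s_mu /eqP.
by move=> p; apply: next_cycle; rewrite -all_zip_rot1.
Qed.

Section Exposed.
Variables (n : nat) (I : SMI n) (mu : {perm 'I_n}) (s : seq ('I_n * 'I_n)).
Hypothesis rho : exposed I mu s.

Lemma exposed_pair q : q \in s -> q = (q.1, mu q.1).
Proof. by case: q => a b /(exposed_partner rho) ->. Qed.

Lemma exposed_inv q : q \in s -> (mu^-1)%g q.2 = q.1.
Proof. by move=> /exposed_pair ->; rewrite permK. Qed.

Lemma exposed_pair_of_woman q y : q \in s -> q.2 = mu y -> q = (y, mu y).
Proof.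
case: q => a b ab /= b_y; rewrite b_y; congr pair.
by apply: (@perm_inj _ mu); rewrite (exposed_partner rho ab).
Qed.

Lemma exposed_woman_inj : {in s &, forall p q, p.2 = q.2 -> p = q}.
Proof.
move=> p q ps qs pq; have q_mu : q.2 = mu q.1 by rewrite {1}(exposed_pair qs).
by rewrite (exposed_pair_of_woman ps (etrans pq q_mu)) -(exposed_pair qs).
Qed.

Lemma exposed_next_worse a b : (a, b) \in s -> PM I a b < PM I a (next s (a, b)).2.
Proof. by move=> /(exposed_step rho); case: (next s (a, b)) => c d /and3P []. Qed.

Lemma exposed_next_prefers a b : (a, b) \in s ->
  PW I (next s (a, b)).2 a < PW I (next s (a, b)).2 ((mu^-1)%g (next s (a, b)).2).
Proof. by move=> /(exposed_step rho); case: (next s (a, b)) => c d /and3P []. Qed.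

Lemma exposed_next_first a b w : (a, b) \in s ->
  PM I a b < PM I a w < PM I a (next s (a, b)).2 ->
  PW I w ((mu^-1)%g w) <= PW I w a.
Proof.
move=> /(exposed_step rho); case: (next s (a, b)) => c d.
case/and3P => _ _ /forallP /(_ w) /implyP between /between.
by rewrite /w_prefers_to_partner -leqNgt.
Qed.

Definition elim_fun x := if (x, mu x) \in s then (next s (x, mu x)).2 else mu x.

Lemma elim_fun_inj : injective elim_fun.
Proof.
have next_in x : (x, mu x) \in s -> next s (x, mu x) \in s by rewrite mem_next.
have next_inj := can_inj (prev_next (exposed_uniq rho)).
move=> x y; rewrite /elim_fun; case: ifP => xs; case: ifP => ys.
- by move=> /(exposed_woman_inj (next_in x xs) (next_in y ys)) /next_inj [].
- move=> q_y.
  by rewrite -(exposed_pair_of_woman (next_in x xs) q_y) next_in in ys.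
- move=> /esym q_x.
  by rewrite -(exposed_pair_of_woman (next_in y ys) q_x) next_in in xs.
- exact: perm_inj.
Qed.

Definition eliminate : {perm 'I_n} := perm elim_fun_inj.

Lemma eliminate_next a b : (a, b) \in s -> eliminate a = (next s (a, b)).2.
Proof. by move=> ab; rewrite permE /elim_fun (exposed_partner rho ab) ab. Qed.

Lemma eliminate_out x : (x, mu x) \notin s -> eliminate x = mu x.
Proof. by rewrite permE /elim_fun => /negPf ->. Qed.

Lemma eliminate_inv_le w : PW I w ((eliminate^-1)%g w) <= PW I w ((mu^-1)%g w).
Proof.
set c := (eliminate^-1)%g w; have elim_c : eliminate c = w by rewrite permKV.
have [cs | cs] := boolP ((c, mu c) \in s).
  have := exposed_next_prefers cs.
  by rewrite -(eliminate_next cs) elim_c; apply: ltnW.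
by move: elim_c; rewrite eliminate_out // => <-; rewrite permK.
Qed.

Lemma eliminate_inv_lt a b : (a, b) \in s -> PW I b ((eliminate^-1)%g b) < PW I b a.
Proof.
move=> ab; have prev_in : prev s (a, b) \in s by rewrite mem_prev.
have [c cs next_c] : exists2 c, (c, mu c) \in s & next s (c, mu c) = (a, b).
  exists (prev s (a, b)).1; rewrite -(exposed_pair prev_in) //.
  by rewrite next_prev // (exposed_uniq rho).
have elim_c : eliminate c = b by rewrite (eliminate_next cs) next_c.
have -> : (eliminate^-1)%g b = c by rewrite -elim_c permK.
by have := exposed_next_prefers cs; rewrite next_c /= (exposed_inv ab).
Qed.

Lemma eliminate_rank_le x w : PW I w x < PW I w ((mu^-1)%g w) ->
  PM I x (eliminate x) <= PM I x w.
Proof.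
move=> w_x; rewrite leqNgt; apply/negP => x_w.
have mu_st := exposed_stable rho.
have [xs | xs] := boolP ((x, mu x) \in s); last first.
  rewrite eliminate_out // in x_w.
  by have := stable_better_woman mu_st x_w; lia.
rewrite (eliminate_next xs) in x_w.
case: (ltngtP (PM I x w) (PM I x (mu x))) => [w_mu | mu_w | /PM_inj w_eq].
- by have := stable_better_woman mu_st w_mu; lia.
- by have := exposed_next_first xs (w := w); rewrite mu_w x_w => /(_ isT); lia.
- by move: w_x; rewrite w_eq permK ltnn.
Qed.

Lemma eliminate_stable : stable I eliminate.
Proof.
apply/stableP => a b; apply/negP => /andP [a_b b_a].
have := eliminate_rank_le (leq_trans b_a (eliminate_inv_le b)).
by rewrite leqNgt a_b.
Qed.

End Exposed.

Section SharedPair.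
Variables (n : nat) (I : SMI n) (mu1 mu2 : {perm 'I_n}).
Variables (s1 s2 : seq ('I_n * 'I_n)).
Hypotheses (rho1 : exposed I mu1 s1) (rho2 : exposed I mu2 s2).
Variables (a b : 'I_n).
Hypotheses (ab1 : (a, b) \in s1) (ab2 : (a, b) \in s2).

Let q1 := next s1 (a, b).
Let q2 := next s2 (a, b).

Lemma shared_next_woman_le : PM I a q2.2 <= PM I a q1.2.
Proof.
have := no_stable_partner_between (nu := eliminate rho1) (m := a) (w' := q2.2)
  (exposed_stable rho2) (eliminate_stable rho1).
rewrite (exposed_partner rho2 ab2) (eliminate_next rho1 ab1) -/q1.
rewrite (exposed_next_worse rho1 ab1) -leqNgt; apply=> w.
exact: (exposed_next_first rho2 ab2 (w := w)).
Qed.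

Lemma shared_next_man_le : q1.2 = q2.2 -> PW I q1.2 q1.1 <= PW I q1.2 q2.1.
Proof.
move=> q12.
have q1_in : q1 \in s1 by rewrite mem_next.
have q2_in : q2 \in s2 by rewrite mem_next.
have elim_inv : ((eliminate rho1)^-1)%g q1.2 = a.
  by rewrite -(eliminate_next rho1 ab1) permK.
have mu2_inv : (mu2^-1)%g q1.2 = q2.1 by rewrite q12 (exposed_inv rho2 q2_in).
have a_q2 : PW I q1.2 a < PW I q1.2 q2.1.
  by have := exposed_next_prefers rho2 ab2; rewrite -/q2 -q12 mu2_inv.
have := no_stable_partner_between_dual (w := q1.2) (m' := q1.1)
  (eliminate_stable rho1) (exposed_stable rho2).
rewrite elim_inv mu2_inv a_q2 -leqNgt; apply=> x /andP [_ x_q1].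
by apply: eliminate_rank_le; rewrite (exposed_inv rho1 q1_in).
Qed.

End SharedPair.

Lemma exposed_next_shared n (I : SMI n) mu1 mu2 s1 s2 a b :
  exposed I mu1 s1 -> exposed I mu2 s2 -> (a, b) \in s1 -> (a, b) \in s2 ->
  next s1 (a, b) = next s2 (a, b).
Proof.
move=> rho1 rho2 ab1 ab2.
have woman_eq : (next s1 (a, b)).2 = (next s2 (a, b)).2.
  apply: (@PM_inj _ I a); apply/eqP; rewrite eqn_leq.
  by rewrite (shared_next_woman_le rho1 rho2) // (shared_next_woman_le rho2 rho1).
have man_eq : (next s1 (a, b)).1 = (next s2 (a, b)).1.
  apply: (@PW_inj _ I (next s1 (a, b)).2); apply/eqP; rewrite eqn_leq.
  rewrite (shared_next_man_le rho1 rho2) // {1 2}woman_eq.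
  by rewrite (shared_next_man_le rho2 rho1).
by rewrite [LHS]surjective_pairing man_eq woman_eq -surjective_pairing.
Qed.

Lemma same_rotation_of_shared_pair n (I : SMI n) s1 s2 p :
  is_rotation I s1 -> is_rotation I s2 -> p \in s1 -> p \in s2 ->
  same_rotation s1 s2.
Proof.
move=> /is_rotation_exposed [mu1 rho1] /is_rotation_exposed [mu2 rho2] p1 p2.
have next_eq q : q \in s1 -> q \in s2 -> next s1 q = next s2 q.
  by case: q => a b; apply: exposed_next_shared rho1 rho2.
have [i le_i rot_i] :=
  rot_of_common_next (exposed_uniq rho1) (exposed_uniq rho2) p1 p2 next_eq.
by apply/existsP; exists (Ordinal (le_i : i < (size s1).+1)); rewrite rot_i.
Qed.

Section RotationWindow.
Variables (n : nat) (I : SMI n) (k : nat).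
Hypothesis I_k_range : k_range I k.

Lemma rotation_man_rank_window s m w : is_rotation I s -> (m, w) \in s ->
  minrankM I m <= PM I m w + 2 * (k - 1) /\ PM I m w < minrankM I m + 2 * (k - 1).
Proof.
move=> /is_rotation_exposed [mu rho] mw.
have := minrankM_le_partner_rank I_k_range (exposed_stable rho) m.
have := partner_rank_le_minrankM I_k_range (eliminate_stable rho) m.
have := exposed_next_worse rho mw.
rewrite (eliminate_next rho mw) (exposed_partner rho mw); lia.
Qed.

Lemma rotation_woman_rank_window s m w : is_rotation I s -> (m, w) \in s ->
  minrankW I w < PW I w m + 2 * (k - 1) /\ PW I w m <= minrankW I w + 2 * (k - 1).
Proof.
move=> /is_rotation_exposed [mu rho] mw.
have := minrankW_le_partner_rank I_k_range (eliminate_stable rho) w.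
have := partner_rank_le_minrankW I_k_range (exposed_stable rho) w.
have := eliminate_inv_lt rho mw.
rewrite (exposed_inv rho mw) /=; lia.
Qed.

Variable rs : seq (seq ('I_n * 'I_n)).
Hypothesis rs_distinct : pairwise (fun s1 s2 => ~~ same_rotation s1 s2) rs.

Lemma size_rotations_of_man (m : 'I_n) :
  (forall s, s \in rs -> is_rotation I s /\ m \in map fst s) ->
  size rs <= 4 * (k - 1).
Proof.
move=> rs_rot; pose partner (s : seq (_ * _)) := odflt m [pick w | (m, w) \in s].
have partner_in s : s \in rs -> (m, partner s) \in s.
  case/rs_rot => _ /mapP [[m' w] mw /= m_eq]; rewrite /partner.
  by case: pickP => [//|/(_ w)]; rewrite m_eq mw.
suff : size rs <= minrankM I m + 2 * (k - 1) - (minrankM I m - 2 * (k - 1)) by lia.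
apply: (size_le_range_inj (f := fun s => PM I m (partner s)) rs_distinct).
  move=> s1 s2 s1_in s2_in /PM_inj same_partner.
  have [rot1 _] := rs_rot s1 s1_in; have [rot2 _] := rs_rot s2 s2_in.
  apply: (same_rotation_of_shared_pair rot1 rot2 (partner_in s1 s1_in)).
  by rewrite same_partner; apply: partner_in.
move=> s s_in; have [rot _] := rs_rot s s_in.
by have := rotation_man_rank_window rot (partner_in s s_in); lia.
Qed.

Lemma size_rotations_of_woman (w : 'I_n) :
  (forall s, s \in rs -> is_rotation I s /\ w \in map snd s) ->
  size rs <= 4 * (k - 1).
Proof.
move=> rs_rot; pose partner (s : seq (_ * _)) := odflt w [pick m | (m, w) \in s].
have partner_in s : s \in rs -> (partner s, w) \in s.
  case/rs_rot => _ /mapP [[m w'] mw /= w_eq]; rewrite /partner.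
  by case: pickP => [//|/(_ m)]; rewrite w_eq mw.
suff : size rs <=
    (minrankW I w + 2 * (k - 1)).+1 - ((minrankW I w).+1 - 2 * (k - 1)) by lia.
apply: (size_le_range_inj (f := fun s => PW I w (partner s)) rs_distinct).
  move=> s1 s2 s1_in s2_in /PW_inj same_partner.
  have [rot1 _] := rs_rot s1 s1_in; have [rot2 _] := rs_rot s2 s2_in.
  apply: (same_rotation_of_shared_pair rot1 rot2 (partner_in s1 s1_in)).
  by rewrite same_partner; apply: partner_in.
move=> s s_in; have [rot _] := rs_rot s s_in.
by have := rotation_woman_rank_window rot (partner_in s s_in); lia.
Qed.

End RotationWindow.

Theorem corollary7p5 (n k : nat) (I : SMI n) :
  0 < k -> k_range I k ->
  (forall m : 'I_n, #|stable_partners_of_man I m| <= 5 * k - 4) /\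
  (forall w : 'I_n, #|stable_partners_of_woman I w| <= 5 * k - 4) /\
  (forall (m : 'I_n) (rs : seq (seq ('I_n * 'I_n))),
     (forall s, s \in rs -> is_rotation I s /\ m \in map fst s) ->
     pairwise (fun s1 s2 => ~~ same_rotation s1 s2) rs ->
     size rs <= 5 * k - 5) /\
  (forall (w : 'I_n) (rs : seq (seq ('I_n * 'I_n))),
     (forall s, s \in rs -> is_rotation I s /\ w \in map snd s) ->
     pairwise (fun s1 s2 => ~~ same_rotation s1 s2) rs ->
     size rs <= 5 * k - 5).
Proof.
move=> k_gt0 I_k; split; [|split; [|split]].
- by move=> m; apply: leq_trans (card_stable_partners_of_man m I_k) _; lia.
- by move=> w; apply: leq_trans (card_stable_partners_of_woman w I_k) _; lia.
- move=> m rs rs_rot rs_distinct.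
  by apply: leq_trans (size_rotations_of_man I_k rs_distinct rs_rot) _; lia.
- move=> w rs rs_rot rs_distinct.
  by apply: leq_trans (size_rotations_of_woman I_k rs_distinct rs_rot) _; lia.
Qed.
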